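(* Let $p\ge1$ be an integer, $x_1,\dots,x_p\in\mathbb{R}_{\ge0}$, $\epsilon\in(0,1]$, and $\delta>0$ with $\delta\le\frac{\max_{i\in[p]}x_i}{4\epsilon^{-1}\log(2p\epsilon^{-1})}$. Let $x'_1,\dots,x'_p\in\mathbb{R}_{\ge0}$ satisfy $x_i\le x'_i\le x_i+\delta$ for all $i\in[p]$. Then $\mathrm{TV}\big(\mathrm{softargmax}^\epsilon_{i\in[p]}x_i,\ \mathrm{softargmax}^\epsilon_{i\in[p]}x'_i\big)\le\frac{10\epsilon^{-1}\log(2p\epsilon^{-1})\delta}{\max_{i\in[p]}x_i}$.
   Context: Softmax: if $\max_i x_i=0$, $\mathrm{softargmax}^\epsilon_{i\in[p]}x_i$ is an arbitrary index $i$ with $x_i=0$. Otherwise, sample $\bm c$ uniformly from $\big[\frac{2\epsilon^{-1}\log(2p\epsilon^{-1})}{\max_i x_i},\frac{4\epsilon^{-1}\log(2p\epsilon^{-1})}{\max_i x_i}\big]$, then sample $\bm i^*\in[p]$ with $\Pr[\bm i^*=i\mid\bm c]=\exp(\bm c x_i)/\sum_{i'\in[p]}\exp(\bm c x_{i'})$, and set $\mathrm{softargmax}^\epsilon_{i\in[p]}x_i=\bm i^*$ (the same procedure applied to $x'_1,\dots,x'_p$ defines $\mathrm{softargmax}^\epsilon_{i\in[p]}x'_i$). $\log$ is natural. The total variation distance of random variables $\bm X,\bm X'$ is $\mathrm{TV}(\bm X,\bm X')=\inf_{\mathcal D}\Pr_{(X,X')\sim\mathcal D}[X\neq X']$ over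 couplings $\mathcal D$. *)

From HB Require Import structures.
From mathcomp Require Import all_boot all_order all_algebra.
From mathcomp Require Import all_classical all_reals all_analysis.
Set Implicit Arguments. Unset Strict Implicit. Unset Printing Implicit Defensive.
Import Order.TTheory GRing.Theory Num.Theory.
Import numFieldNormedType.Exports.
Local Open Scope classical_set_scope.
Local Open Scope ring_scope.

(* max_{i in [p]} x_i ; the x_i are nonnegative in all uses, base 0 *)
Definition maxx (R : realType) (p : nat) (x : 'I_p -> R) : R :=
  \big[Num.max/0]_(i < p) x i.

Definition sa_L (R : realType) (p : nat) (eps : R) : R :=
  eps^-1 * ln (2 * p%:R * eps^-1).

(* Probability mass function of softargmax^eps_{i in [p]} x_i :
   c uniform on [2L/M, 4L/M], then i* = i with prob exp(c x_i)/sum exp(c x_j).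
   If M = 0 ("arbitrary index with x_i = 0"), we pick index 0 (all x_i = 0
   for nonnegative x). *)
Definition softargmax_pmf (R : realType) (p : nat) (eps : R)
    (x : 'I_p -> R) (i : 'I_p) : R :=
  let M := maxx x in
  if M == 0 then (if val i == 0%N then 1 else 0)
  else
    let a := 2 * sa_L p eps / M in
    let b := 4 * sa_L p eps / M in
    (b - a)^-1 *
      \int[lebesgue_measure]_(c in `[a, b]%classic)
         (expR (c * x i) / \sum_(j < p) expR (c * x j)).

Definition is_coupling (R : realType) (p : nat) (P Q : 'I_p -> R)
    (D : 'I_p -> 'I_p -> R) : Prop :=
  (forall i j, 0 <= D i j) /\
  (forall i, \sum_(j < p) D i j = P i) /\
  (forall j, \sum_(i < p) D i j = Q j).

Definition TV (R : realType) (p : nat) (P Q : 'I_p -> R) : R :=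
  inf [set r : R | exists D, is_coupling P Q D /\
        r = \sum_(i < p) \sum_(j < p) (if i != j then D i j else 0)].

From HB Require Import structures.
From mathcomp Require Import all_boot all_order all_algebra.
From mathcomp Require Import all_classical all_reals all_analysis.
From mathcomp Require Import ring lra.
Import Order.TTheory GRing.Theory Num.Theory.
Import numFieldNormedType.Exports.
Local Open Scope classical_set_scope.
Local Open Scope ring_scope.

(* Writing L := eps^-1 log (2 p eps^-1), M := max x and a := 2L/M, the law of
   softargmax is the average over c in [a, 2a] of softmax at inverse temperature c.
   Raising x to x' has two effects.  At fixed c every softmax weight shrinks by at
   most the factor exp (- c delta) >= 1 - c delta, which loses at most 2 a delta of
   mass.  The maximum grows to M' <= M + delta, so the window moves down to
   [a', 2a'] with a' = 2L/M' >= a/2; the mass of [a, 2a] not covered by [a', 2a']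
   is at most (2a - 2a')/a = 2(M' - M)/M' <= 2 delta/M.  The maximal coupling
   bounds the TV distance by the total excess mass, and L >= 1/2 turns
   (4L + 2) delta/M into at most 10 L delta/M. *)

Lemma mulr_psumK {R : realFieldType} {T : finType} {u : T -> R} {s : R} (i : T) :
  (forall j, 0 <= u j) -> \sum_j u j = s -> u i * s / s = u i.
Proof.
move=> u_ge0 <-; have [s0|s_neq0] := eqVneq (\sum_j u j) 0; last by rewrite mulfK.
move/eqP: s0; rewrite psumr_eq0 => [/allP/(_ i (mem_index_enum i))/eqP->|j _].
  by rewrite !mul0r.
exact: u_ge0.
Qed.

Section maximal_coupling.
Context {R : realType} {p : nat} (P Q : 'I_p -> R).

Lemma TV_le_coupling D : is_coupling P Q D ->
  TV P Q <= \sum_(i < p) \sum_(j < p) (if i != j then D i j else 0).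
Proof.
move=> PQD; apply: ge_inf; last by exists D.
exists 0 => _ [D' [[D'_ge0 _] ->]].
by rewrite sumr_ge0 // => i _; rewrite sumr_ge0 // => j _; case: ifP.
Qed.

Hypotheses (P_ge0 : forall i, 0 <= P i) (Q_ge0 : forall i, 0 <= Q i).
Hypothesis sumPQ : \sum_(i < p) P i = \sum_(i < p) Q i.

Let m i := Num.min (P i) (Q i).
Let s := \sum_(i < p) (P i - m i).

Let Pm_ge0 i : 0 <= P i - m i. Proof. by rewrite subr_ge0 ge_min lexx. Qed.
Let Qm_ge0 i : 0 <= Q i - m i. Proof. by rewrite subr_ge0 ge_min lexx orbT. Qed.
Let sumQm : \sum_(i < p) (Q i - m i) = s. Proof. by rewrite /s !sumrB sumPQ. Qed.

(* Keep the common mass on the diagonal, spread the excesses independently. *)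
Definition maximal_coupling i j :=
  (if i == j then m i else 0) + (P i - m i) * (Q j - m j) / s.

Lemma maximal_couplingP : is_coupling P Q maximal_coupling.
Proof.
split; [|split] => [i j|i|j]; rewrite /maximal_coupling.
- rewrite addr_ge0 ?divr_ge0 ?mulr_ge0 ?sumr_ge0 //.
  by case: eqP => // _; rewrite le_min P_ge0 Q_ge0.
- rewrite big_split /= -big_mkcond /= (big_pred1 i) => [|k]; last by rewrite eq_sym.
  by rewrite -mulr_suml -mulr_sumr sumQm (mulr_psumK _ Pm_ge0 erefl) addrC subrK.
- rewrite big_split /= -big_mkcond /= big_pred1_eq -!mulr_suml -/s.
  by rewrite [s * _]mulrC (mulr_psumK _ Qm_ge0 sumQm) addrC subrK.
Qed.

Lemma TV_le_excess : TV P Q <= \sum_(i < p) (P i - Num.min (P i) (Q i)).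
Proof.
apply: le_trans (TV_le_coupling _ maximal_couplingP) _.
apply: (@le_trans _ _ (\sum_(i < p) \sum_(j < p) ((P i - m i) * (Q j - m j) / s))).
  apply: ler_sum => i _; apply: ler_sum => j _; rewrite /maximal_coupling.
  by case: eqP => _ /=; rewrite ?add0r ?divr_ge0 ?mulr_ge0 ?sumr_ge0.
under eq_bigr do rewrite -mulr_suml -mulr_sumr sumQm.
rewrite -!mulr_suml -/s; have [->|s_neq0] := eqVneq s 0; first by rewrite !mul0r.
by rewrite mulfK.
Qed.

End maximal_coupling.

Lemma Rintegral_sum d (T : measurableType d) (R : realType)
    (mu : {measure set T -> \bar R}) (D : set T) (I : Type) (s : seq I)
    (F : I -> T -> R) :
  measurable D -> (forall i, mu.-integrable D (EFin \o F i)) ->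
  \int[mu]_(t in D) (\sum_(i <- s) F i t) = \sum_(i <- s) \int[mu]_(t in D) F i t.
Proof.
move=> mD intF; elim: s => [|i s IHs].
  by under eq_Rintegral do rewrite big_nil; rewrite big_nil Rintegral_cst // mul0r.
rewrite big_cons -IHs; under eq_Rintegral do rewrite big_cons.
rewrite RintegralD //.
have := @integrable_sum _ _ _ mu D mD _ s xpredT _ (fun i _ => intF i).
by apply: eq_integrable => // t _; rewrite /= sumEFin.
Qed.

Section lebesgue_interval.
Context {R : realType}.
Local Notation mu := (@lebesgue_measure R).

Lemma lebesgue_measure_itv_fine (u v : R) b1 b2 : u <= v ->
  fine (mu [set` Interval (BSide b1 u) (BSide b2 v)]) = v - u.
Proof.
move=> uv; rewrite lebesgue_measure_itv /= lte_fin.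
by case: ltgtP uv => // <-; rewrite subrr.
Qed.

Lemma continuous_integrable_subitv (f : R -> R) (I : interval R) (u v : R) :
  continuous f -> [set` I] `<=` `[u, v] -> mu.-integrable [set` I] (EFin \o f).
Proof.
move=> cf Iuv.
apply: (@integrableS _ _ _ mu `[u, v] _ _ (measurable_itv _) (measurable_itv I) Iuv).
apply: continuous_compact_integrable; first exact: segment_compact.
exact: continuous_subspaceT.
Qed.

End lebesgue_interval.

Section softmax.
Context {R : realType} {p : nat}.
Hypothesis p_gt0 : (0 < p)%N.
Implicit Types (x : 'I_p -> R) (a c d : R).
Local Notation mu := (@lebesgue_measure R).

Definition softmax x c i := expR (c * x i) / \sum_(j < p) expR (c * x j).

Lemma sum_expR_gt0 x c : 0 < \sum_(j < p) expR (c * x j).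
Proof.
rewrite (bigD1 (Ordinal p_gt0)) //= ltr_pwDl ?expR_gt0 //.
by rewrite sumr_ge0 // => j _; rewrite ltW ?expR_gt0.
Qed.

Lemma softmax_ge0 x c i : 0 <= softmax x c i.
Proof. by rewrite divr_ge0 // ltW // ?expR_gt0 ?sum_expR_gt0. Qed.

Lemma sum_softmax x c : \sum_(i < p) softmax x c i = 1.
Proof. by rewrite -mulr_suml divff // gt_eqF // sum_expR_gt0. Qed.

Lemma continuous_softmax x i : continuous (fun c => softmax x c i).
Proof.
have cexp j : continuous (fun c : R => expR (c * x j)).
  move=> c; apply: continuous_comp; last exact: continuous_expR.
  by apply: cvgMr_tmp; exact: cvg_id.
have csum : continuous (fun c : R => \sum_(j < p) expR (c * x j)).
  by apply: (@continuous_big _ _ +%R 0 xpredT add_continuous) => j _; exact: cexp.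
move=> c; apply: cvgM; first exact: cexp.
by apply: cvgV; [rewrite gt_eqF // sum_expR_gt0 | exact: csum].
Qed.

Lemma sum_Rintegral_softmax x (I : interval R) u v : [set` I] `<=` `[u, v] ->
  \sum_(i < p) \int[mu]_(c in [set` I]) softmax x c i = fine (mu [set` I]).
Proof.
move=> Iuv; rewrite -Rintegral_sum; first last.
- by move=> i; apply: continuous_integrable_subitv Iuv; exact: continuous_softmax.
- exact: measurable_itv.
under eq_Rintegral do rewrite sum_softmax.
by rewrite Rintegral_cst ?mul1r //; exact: measurable_itv.
Qed.

Lemma softmax_shift_ge x x' d c i : 0 <= c ->
  (forall j, x j <= x' j) -> (forall j, x' j <= x j + d) ->
  (1 - c * d) * softmax x c i <= softmax x' c i.
Proof.
move=> c_ge0 xx' x'x.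
(* each numerator grows, the denominator by a factor at most [expR (c * d)] *)
apply: (@le_trans _ _ ((expR (c * d))^-1 * softmax x c i)).
  by rewrite ler_wpM2r ?softmax_ge0 // -expRN expR_ge1Dx.
rewrite /softmax mulrCA -invfM; apply: ler_pM.
- by rewrite ltW ?expR_gt0.
- by rewrite invr_ge0 mulr_ge0 ?ltW ?expR_gt0 ?sum_expR_gt0.
- by rewrite ler_expR ler_wpM2l.
rewrite lef_pV2 ?posrE ?mulr_gt0 ?expR_gt0 ?sum_expR_gt0 // mulr_sumr.
by apply: ler_sum => j _; rewrite -expRD ler_expR -mulrDr ler_wpM2l // addrC.
Qed.

Definition softmax_avg x a i := a^-1 * \int[mu]_(c in `[a, 2 * a]) softmax x c i.

Lemma softmax_avg_ge0 x a i : 0 <= a -> 0 <= softmax_avg x a i.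
Proof.
move=> a_ge0; rewrite mulr_ge0 ?invr_ge0 //.
by apply: Rintegral_ge0 => c _; exact: softmax_ge0.
Qed.

Lemma sum_softmax_avg x a : 0 < a -> \sum_(i < p) softmax_avg x a i = 1.
Proof.
move=> a_gt0; rewrite -mulr_sumr (@sum_Rintegral_softmax _ _ a (2 * a)) //.
rewrite lebesgue_measure_itv_fine; last by rewrite ler_peMl ?ltW // ltr1n.
by rewrite mulr_natl mulr2n addrK mulVf // gt_eqF.
Qed.

Lemma softmax_avg_shift x x' d a i : 0 < a -> 0 <= d ->
  (forall j, x j <= x' j) -> (forall j, x' j <= x j + d) ->
  softmax_avg x a i - softmax_avg x' a i <= 2 * a * d * softmax_avg x a i.
Proof.
move=> a_gt0 d_ge0 xx' x'x; rewrite /softmax_avg.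
set S := \int[mu]_(c in _) softmax x c i; set S' := \int[mu]_(c in _) softmax x' c i.
have S'_ge : (1 - 2 * a * d) * S <= S'.
  have int_softmax y : mu.-integrable `[a, 2 * a] (EFin \o (fun c => softmax y c i)).
    exact: continuous_integrable_subitv (continuous_softmax y i) (@subset_refl _ _).
  rewrite /S -RintegralZl ?measurable_itv //; apply: le_Rintegral => //.
  - apply: (@continuous_integrable_subitv _ _ _ a (2 * a)) => // c.
    by apply: cvgMl_tmp; exact: continuous_softmax.
  move=> c /=; rewrite in_itv /= => /andP[ac c2a].
  have c_ge0 : 0 <= c by rewrite (le_trans _ ac) ?ltW.
  apply: le_trans (softmax_shift_ge _ _ _ _ i c_ge0 xx' x'x).
  by rewrite ler_wpM2r ?softmax_ge0 // lerB // ler_wpM2r.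
rewrite mulrCA -mulrBr; apply: ler_wpM2l; first by rewrite invr_ge0 ltW.
by move: S'_ge; rewrite mulrBl mul1r; lra.
Qed.

Lemma softmax_avg_window x a a' i : 0 < a' -> a' <= a -> a <= 2 * a' ->
  softmax_avg x a i - softmax_avg x a' i <=
    a^-1 * \int[mu]_(c in `]2 * a', 2 * a]) softmax x c i.
Proof.
move=> a'_gt0 a'a a2a'; have a_gt0 : 0 < a by apply: lt_le_trans a'a.
pose F u v := \int[mu]_(c in `[u, v]) softmax x c i.
have int_softmax u v : mu.-integrable `[u, v] (EFin \o (fun c => softmax x c i)).
  exact: continuous_integrable_subitv (continuous_softmax x i) (@subset_refl _ _).
have split_right : F a (2 * a) =
    F a (2 * a') + \int[mu]_(c in `]2 * a', 2 * a]) softmax x c i.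
  apply/eqP; rewrite addrC -subr_eq; apply/eqP/Rintegral_itvB => //.
  by rewrite bnd_simp ler_wpM2l.
have split_left : F a' (2 * a') = F a' a + F a (2 * a').
  apply/eqP; rewrite addrC -subr_eq; apply/eqP.
  rewrite /F Rintegral_itvB ?bnd_simp //; apply: Rintegral_itv_obnd_cbnd.
  apply: (@continuous_integrable_subitv _ _ _ a (2 * a')) => [|c /=].
    exact: continuous_softmax.
  by rewrite !in_itv /= => /andP[/ltW-> ->].
have F_ge0 u v : 0 <= F u v by apply: Rintegral_ge0 => c _; exact: softmax_ge0.
have inv_le : a^-1 * F a (2 * a') <= a'^-1 * F a (2 * a').
  by rewrite ler_wpM2r // lef_pV2 ?posrE.
have : 0 <= a'^-1 * F a' a by rewrite mulr_ge0 // invr_ge0 ltW.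
rewrite /softmax_avg -/(F a (2 * a)) -/(F a' (2 * a')) split_right split_left.
by move: inv_le; rewrite !mulrDr; lra.
Qed.

Lemma sum_softmax_avg_excess (x x' : 'I_p -> R) (d a a' : R) :
  0 <= d -> (forall j, x j <= x' j) -> (forall j, x' j <= x j + d) ->
  0 < a' -> a' <= a -> a <= 2 * a' ->
  \sum_(i < p) (softmax_avg x a i - Num.min (softmax_avg x a i) (softmax_avg x' a' i))
    <= 2 * a * d + 2 * (a - a') / a.
Proof.
move=> d_ge0 xx' x'x a'_gt0 a'a a2a'.
set P := softmax_avg x a; set Q := softmax_avg x' a'.
have a_gt0 : 0 < a by apply: lt_le_trans a'a.
pose W i := a^-1 * \int[mu]_(c in `]2 * a', 2 * a]) softmax x' c i.
have sumW : \sum_(i < p) W i = 2 * (a - a') / a.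
  rewrite -mulr_sumr (@sum_Rintegral_softmax _ _ (2 * a') (2 * a)).
    by rewrite lebesgue_measure_itv_fine ?ler_wpM2l // -mulrBr mulrC.
  by move=> c /=; rewrite !in_itv /= => /andP[/ltW-> ->].
apply: le_trans (_ : \sum_(i < p) (2 * a * d * P i + W i) <= _); last first.
  by rewrite big_split /= -mulr_sumr sum_softmax_avg // mulr1 sumW.
apply: ler_sum => i _.
have a_ge0 := ltW a_gt0; have P_ge0 : 0 <= P i by exact: softmax_avg_ge0.
have W_ge0 : 0 <= W i.
  apply: mulr_ge0; first by rewrite invr_ge0 ltW.
  by apply: Rintegral_ge0 => c _; exact: softmax_ge0.
have [_|_] := leP (P i) (Q i).
  by rewrite subrr addr_ge0 // mulr_ge0 // mulr_ge0 // mulr_ge0.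
apply: le_trans (_ : (P i - softmax_avg x' a i) + (softmax_avg x' a i - Q i) <= _).
  by rewrite addrA subrK.
apply: lerD; first exact: softmax_avg_shift.
exact: softmax_avg_window.
Qed.

End softmax.

Lemma sum_softmax_avg_excess_rescaled {R : realType} {p : nat} (x x' : 'I_p -> R)
    (d L M M' : R) :
  (0 < p)%N -> 0 <= d -> (forall j, x j <= x' j) -> (forall j, x' j <= x j + d) ->
  0 < L -> 0 < M -> M <= M' -> M' <= M + d -> d <= M ->
  \sum_(i < p) (softmax_avg x (2 * L / M) i -
      Num.min (softmax_avg x (2 * L / M) i) (softmax_avg x' (2 * L / M') i))
    <= (4 * L + 2) * d / M.
Proof.
move=> p_gt0 d_ge0 xx' x'x L_gt0 M_gt0 MM' M'M dM.
have M'_gt0 : 0 < M' by apply: lt_le_trans MM'.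
apply: le_trans (sum_softmax_avg_excess p_gt0 x x' d (2 * L / M) (2 * L / M')
  d_ge0 xx' x'x _ _ _) _.
- by rewrite divr_gt0 ?mulr_gt0.
- apply: ler_wpM2l; first by rewrite mulr_ge0 ?ltW.
  by rewrite lef_pV2 ?posrE.
- have -> : 2 * (2 * L / M') = 2 * L / (M' / 2) by field; rewrite gt_eqF.
  apply: ler_wpM2l; first by rewrite mulr_ge0 ?ltW.
  by rewrite lef_pV2 ?posrE ?divr_gt0 //; lra.
have -> : 2 * (2 * L / M - 2 * L / M') / (2 * L / M) = 2 * (M' - M) / M'.
  by field; rewrite ?gt_eqF.
have -> : (4 * L + 2) * d / M = 2 * (2 * L / M) * d + 2 * (d / M) by ring.
rewrite lerD2l -mulrA ler_wpM2l //; apply: ler_pM.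
- by rewrite subr_ge0.
- by rewrite invr_ge0 ltW.
- by rewrite lerBlDl.
- by rewrite lef_pV2 ?posrE.
Qed.

Section maxx.
Context {R : realType} {p : nat}.
Implicit Types x : 'I_p -> R.

Lemma maxx_ge0 x : 0 <= maxx x.
Proof.
rewrite /maxx; elim: (index_enum _) => [|j s IHs]; first by rewrite big_nil.
by rewrite big_cons le_max IHs orbT.
Qed.

Lemma le_maxx x i : x i <= maxx x.
Proof.
rewrite /maxx; elim: (index_enum _) (mem_index_enum i) => [//|j s IHs].
by rewrite in_cons big_cons le_max => /orP[/eqP->|/IHs->]; rewrite ?lexx ?orbT.
Qed.

Lemma maxx_le x c : 0 <= c -> (forall i, x i <= c) -> maxx x <= c.
Proof.
move=> c_ge0 xc; apply: (big_ind (fun u => u <= c)) => // u v uc vc.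
by rewrite ge_max uc vc.
Qed.

Lemma maxx_le_maxx x x' : (forall i, x i <= x' i) -> maxx x <= maxx x'.
Proof.
by move=> xx'; apply: maxx_le (maxx_ge0 _) _ => i; rewrite (le_trans (xx' i)) ?le_maxx.
Qed.

Lemma maxx_le_addr x x' d : 0 <= d -> (forall i, x' i <= x i + d) ->
  maxx x' <= maxx x + d.
Proof.
move=> d_ge0 x'x; apply: maxx_le; first by rewrite addr_ge0 ?maxx_ge0.
by move=> i; rewrite (le_trans (x'x i)) // lerD2r le_maxx.
Qed.

End maxx.

Lemma softargmax_pmfE {R : realType} {p : nat} (eps : R) (x : 'I_p -> R) :
  maxx x != 0 -> softargmax_pmf eps x = softmax_avg x (2 * sa_L p eps / maxx x).
Proof.
move=> M_neq0; apply/funext => i; rewrite /softargmax_pmf (negbTE M_neq0).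
set a := 2 * sa_L p eps / maxx x.
have -> : 4 * sa_L p eps / maxx x = 2 * a by rewrite /a; ring.
by have -> : 2 * a - a = a by ring.
Qed.

Lemma sa_L_ge_half {R : realType} {p : nat} {eps : R} :
  (0 < p)%N -> 0 < eps -> eps <= 1 -> 1 / 2 <= sa_L p eps.
Proof.
move=> p_gt0 eps_gt0 eps_le1; set t := 2 * p%:R * eps^-1.
have inv_eps_ge1 : 1 <= eps^-1 by rewrite invf_ge1.
have t_ge2 : 2 <= t.
  have : 1 <= p%:R :> R by rewrite ler1n.
  by rewrite /t; nra.
have t_gt0 : 0 < t by apply: lt_le_trans t_ge2.
(* [ln t >= 1 - 1/t] is [exp (- ln t) >= 1 - ln t] *)
have ln_t_ge : 1 - t^-1 <= ln t.
  by have := expR_ge1Dx (- ln t); rewrite expRN lnK ?posrE //; lra.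
have t_inv_le : t^-1 <= 2^-1 by rewrite lef_pV2 ?posrE.
have ln_t_ge0 : 0 <= ln t by rewrite ln_ge0 // (le_trans _ t_ge2) ?ler1n.
rewrite /sa_L -/t (le_trans _ (ler_peMl ln_t_ge0 inv_eps_ge1)) //; lra.
Qed.

Theorem mainTheorem9 (R : realType) (p : nat) (x x' : 'I_p -> R) (eps delta : R) :
  (1 <= p)%N ->
  (forall i, 0 <= x i) ->
  0 < eps -> eps <= 1 ->
  0 < delta ->
  delta <= maxx x / (4 * sa_L p eps) ->
  (forall i, 0 <= x' i) ->
  (forall i, x i <= x' i /\ x' i <= x i + delta) ->
  TV (softargmax_pmf eps x) (softargmax_pmf eps x') <=
    10 * sa_L p eps * delta / maxx x.
Proof.
move=> p_gt0 _ eps_gt0 eps_le1 delta_gt0 delta_le _ xx'.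
have x_le_x' j : x j <= x' j by case: (xx' j).
have x'_le_x j : x' j <= x j + delta by case: (xx' j).
have L_ge := sa_L_ge_half p_gt0 eps_gt0 eps_le1.
set L := sa_L p eps in delta_le L_ge *; set M := maxx x in delta_le *.
have L_gt0 : 0 < L by apply: lt_le_trans L_ge.
have M_gt0 : 0 < M.
  by move: (lt_le_trans delta_gt0 delta_le); rewrite pmulr_lgt0 // invr_gt0 mulr_gt0.
have delta_le_M : delta <= M.
  have L4_gt0 : 0 < 4 * L by rewrite mulr_gt0.
  apply: le_trans delta_le _; rewrite ler_pdivrMr // ler_peMr ?ltW //; lra.
have MM' : M <= maxx x' by exact: maxx_le_maxx.
have M'M : maxx x' <= M + delta by apply: maxx_le_addr; rewrite ?ltW.
have M'_gt0 : 0 < maxx x' by apply: lt_le_trans MM'.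
have a_gt0 : 0 < 2 * L / M by rewrite divr_gt0 // mulr_gt0.
have a'_gt0 : 0 < 2 * L / maxx x' by rewrite divr_gt0 // mulr_gt0.
rewrite !softargmax_pmfE -/L -/M ?gt_eqF //.
apply: le_trans (TV_le_excess _ _ _ _ _) _.
- by move=> i; apply/softmax_avg_ge0/ltW.
- by move=> i; apply/softmax_avg_ge0/ltW.
- by rewrite !sum_softmax_avg.
apply: le_trans (sum_softmax_avg_excess_rescaled x x' delta L M (maxx x') p_gt0
  (ltW delta_gt0) x_le_x' x'_le_x L_gt0 M_gt0 MM' M'M delta_le_M) _.
rewrite ler_pM2r ?invr_gt0 // ler_pM2r //; lra.
Qed.
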